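(* Let $\overrightarrow{G}$ be a digraph of order $n$ with no weakly connected components of order less than $4$. Then $\overrightarrow{G}$ has a $\Gamma$-irregular labeling for every finite Abelian group $\Gamma$ such that $|\Gamma|\ge 2n+1$.
   Context: For a digraph $\overrightarrow{G}=(V,A)$ and a finite Abelian group $\Gamma$, a labeling $\psi\colon A\to\Gamma$ is $\Gamma$-irregular if the map $\varphi_\psi\colon V\to\Gamma$, $\varphi_\psi(x)=\sum_{y\in N^-(x)}\psi((y,x))-\sum_{y\in N^+(x)}\psi((x,y))$, is injective (here $N^-(x)$ and $N^+(x)$ are the in- and out-neighbourhoods of $x$). A weakly connected component of $\overrightarrow{G}$ is the subdigraph induced by the vertex set of a connected component of the underlying undirected graph of $\overrightarrow{G}$. *)

From mathcomp Require Import all_boot all_algebra.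
Set Implicit Arguments. Unset Strict Implicit. Unset Printing Implicit Defensive.
Import GRing.Theory.
Local Open Scope ring_scope.

(* A digraph on the finite vertex type V is given by its arc relation
   [a : rel V]: (x,y) is an arc iff [a x y]. Digraphs have no loops. *)
Definition loopless (V : finType) (a : rel V) : Prop := forall x, ~~ a x x.

Definition underlying (V : finType) (a : rel V) : rel V :=
  fun x y => a x y || a y x.

Definition wcomp (V : finType) (a : rel V) (x : V) : {set V} :=
  [set y | connect (underlying a) x y].

(* a labeling psi assigns psi x y to the arc (x,y); values on non-arcs are
   irrelevant.  phi(x) = sum over in-arcs minus sum over out-arcs. *)
Definition weight (V : finType) (a : rel V) (G : zmodType) (psi : V -> V -> G)
  (x : V) : G :=
  \sum_(y | a y x) psi y x - \sum_(y | a x y) psi x y.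

Definition irregular_labeling (V : finType) (a : rel V) (G : zmodType)
  (psi : V -> V -> G) : Prop :=
  injective (weight a psi).

From mathcomp Require Import all_boot all_algebra zify.

(* Every map w : V -> G summing to 0 on each weakly connected component is the
   weight map of a labeling: route the value w x along an undirected path from
   the root of the component of x to x; each root then receives minus the sum of
   w over its component, which is 0.  It thus suffices to find an injective
   such w, which is built one component C at a time.  The values still free form
   a set U with 2|U| >= |G| + 2|C| + 1, which leaves room to fix all but three
   values of C greedily.  Three distinct values in U with a prescribed sum t
   exist because at least |U|(2|U| - |G|) pairs (x, y) of U have t - x - y in U,
   while at most 3|U| of them give a triple with a repetition. *)

Section ZeroSumInjections.
Set Implicit Arguments. Unset Strict Implicit. Unset Printing Implicit Defensive.
Import GRing.Theory.
Local Open Scope ring_scope.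

Lemma card_pairs (T1 T2 : finType) (P : T1 -> T2 -> bool) :
  #|[set p : T1 * T2 | P p.1 p.2]| = (\sum_(x : T1) #|[set y | P x y]|)%N.
Proof.
rewrite -sum1_card (eq_bigl _ _ (fun p => in_set _ p)) /=.
rewrite -(pair_big_dep xpredT P (fun _ _ => 1%N)) /=.
by apply: eq_bigr => x _; rewrite -sum1_card; apply: eq_bigl => y; rewrite inE.
Qed.

Lemma leq_card_setI (T : finType) (A B : {set T}) :
  (#|A| + #|B| - #|T| <= #|A :&: B|)%N.
Proof. by rewrite -cardsUI leq_subLR leq_add2r max_card. Qed.

Variable G : finZmodType.

Section DistinctTriples.

Variables (U : {set G}) (t : G).

Let completable := [set p : G * G | [&& p.1 \in U, p.2 \in U & t - p.1 - p.2 \in U]].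

Lemma card_completable_ge : (#|U| * (2 * #|U| - #|G|) <= #|completable|)%N.
Proof.
rewrite (card_pairs (fun x y => [&& x \in U, y \in U & t - x - y \in U])).
rewrite -sum_nat_const big_mkcond leq_sum // => x _; case: ifP => // xU.
have subK : injective (fun y => t - x - y) by move=> y1 y2 /addrI /oppr_inj.
have card_fiber : #|[set y | t - x - y \in U]| = #|U|.
  by rewrite -[in RHS](card_preimset _ subK).
apply: leq_trans (leq_trans (leq_card_setI U [set y | t - x - y \in U])
                            (subset_leq_card _)).
  by rewrite card_fiber addnn -mul2n.
by apply/subsetP => y; rewrite !inE.
Qed.

Lemma card_completable_le :
    (forall x y, x \in U -> y \in U -> t - x - y \in U ->
       ~~ uniq [:: x; y; t - x - y]) ->
  (#|completable| <= 3 * #|U|)%N.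
Proof.
move=> degenerate.
pose D1 := [set (x, x) | x in U].
pose D2 := [set (t - y - y, y) | y in U].
pose D3 := [set (x, t - x - x) | x in U].
have sub_D : completable \subset D1 :|: D2 :|: D3.
  apply/subsetP => -[x y]; rewrite inE /= => /and3P[xU yU zU].
  have [<- | xy] := eqVneq x y; first by rewrite !inE imset_f.
  have [yz | yz] := eqVneq y (t - x - y).
    rewrite !inE (_ : x = t - y - y) ?imset_f ?orbT //.
    by rewrite {2}yz opprB addrA subrK subKr.
  move: (degenerate x y xU yU zU).
  rewrite /= !inE (negbTE xy) yz /= andbT negbK => /eqP xz.
  by rewrite (_ : y = t - x - x) ?imset_f ?orbT // {2}xz subKr.
have cD1 : (#|D1| <= #|U|)%N := leq_imset_card _ _.
have cD2 : (#|D2| <= #|U|)%N := leq_imset_card _ _.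
have cD3 : (#|D3| <= #|U|)%N := leq_imset_card _ _.
apply: leq_trans (subset_leq_card sub_D) _.
apply: leq_trans (leq_card_setU _ _).1 _.
apply: leq_trans (leq_add (leq_trans (leq_card_setU _ _).1 (leq_add cD1 cD2)) cD3) _.
lia.
Qed.

Lemma distinct_triple_sum : (#|G| + 7 <= 2 * #|U|)%N ->
  exists x y z, [/\ x \in U, y \in U, z \in U, uniq [:: x; y; z] & x + y + z = t].
Proof.
move=> large_U.
pose good (p : G * G) :=
  [&& p.1 \in U, p.2 \in U, t - p.1 - p.2 \in U & uniq [:: p.1; p.2; t - p.1 - p.2]].
have [[x y] /and4P[xU yU zU xyz] | no_good] := pickP good.
  exists x, y, (t - x - y); split => //.
  by rewrite -[t - x - y]addrA -opprD addrC addNKr.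
have few_completable : (#|completable| <= 3 * #|U|)%N.
  apply: card_completable_le => x y xU yU zU.
  by move: (no_good (x, y)); rewrite /good /= xU yU zU => /negbT.
have := card_completable_ge; nia.
Qed.

End DistinctTriples.

Lemma distinct_sum_in (T : eqType) (r : seq T) (U : {set G}) (t : G) :
    uniq r -> (3 <= size r)%N -> (#|G| + 2 * size r + 1 <= 2 * #|U|)%N ->
  exists f : T -> G,
    [/\ uniq (map f r), {in r, forall x, f x \in U} & \sum_(x <- r) f x = t].
Proof.
elim: r U t => [|x r IHr] U t //= /andP[xr ur] size_r large_U.
have [size_r' | small_r] := leqP 3 (size r); last first.
  move: small_r size_r xr ur large_U {IHr}.
  case: r => [|y [|z [|? ?]]] //= _ _; rewrite !inE negb_or => /andP[xy xz] /andP[yz _].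
  rewrite -addnA => large_U.
  have [a [b [c [aU bU cU abc sum_abc]]]] := distinct_triple_sum t large_U.
  exists (fun v => if v == x then a else if v == y then b else c).
  rewrite !big_cons big_nil eqxx !(eq_sym _ x) (negbTE xy) (negbTE xz) eqxx.
  rewrite (eq_sym z) (negbTE yz) addr0 addrA; split => // v _.
  by do 2?case: ifP.
have /set0Pn[u uU] : U != set0.
  by apply: contraTneq large_U => ->; rewrite cards0 muln0 addn1 ltn0.
have large_U' : (#|G| + 2 * size r + 1 <= 2 * #|U :\ u|)%N.
  move: large_U; rewrite (cardsD1 u U) uU; set g := #|G|; set k := #|U :\ u|; lia.
have [f [f_uniq f_U f_sum]] := IHr (U :\ u) (t - u) ur size_r' large_U'.
pose g v := if v == x then u else f v.
have g_r : {in r, g =1 f}.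
  by move=> v vr; rewrite /g; case: eqP => // vx; rewrite -vx vr in xr.
exists g; split.
- have -> : map g r = map f r by apply/eq_in_map.
  rewrite /= f_uniq andbT /g eqxx.
  by apply/mapP => -[v /f_U vU uv]; move: vU; rewrite -uv setD11.
- move=> v /[!inE] /orP[/eqP-> | vr]; first by rewrite /g eqxx.
  by rewrite g_r //; move/f_U: vr => /setD1P[].
- by rewrite big_cons (eq_big_seq _ g_r) f_sum /g eqxx addrC subrK.
Qed.

Lemma extend_zero_sum_injection (T : finType) (B D : {set T}) (w : T -> G) :
    B \subset D -> (3 <= #|B|)%N -> (2 * #|D| + 1 <= #|G|)%N ->
    {in D :\: B &, injective w} ->
  exists w2 : T -> G,
    [/\ {in D &, injective w2}, {in D :\: B, w2 =1 w} & \sum_(x in B) w2 x = 0].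
Proof.
move=> BD B3 large_G w_inj.
set U := ~: (w @: (D :\: B)).
have large_U : (#|G| + 2 * size (enum B) + 1 <= 2 * #|U|)%N.
  move: large_G; have := cardsC (w @: (D :\: B)); have := leq_imset_card w (D :\: B).
  have := cardsID B D; rewrite (setIidPr BD) -cardE.
  rewrite /U; set g := #|G|; lia.
have B3' : (3 <= size (enum B))%N by rewrite -cardE.
have [f [f_uniq f_U f_sum]] := distinct_sum_in 0 (enum_uniq B) B3' large_U.
have f_inj : {in B &, injective f} by apply/dinjectiveP.
have fBU x : x \in B -> f x \notin w @: (D :\: B).
  by move=> xB; have := f_U x; rewrite mem_enum inE => /(_ xB).
exists (fun x => if x \in B then f x else w x); split.
- move=> x y xD yD /=; case: ifP => xB; case: ifP => yB.
  + exact: f_inj.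
  + by move=> fxy; move: (fBU x xB); rewrite fxy imset_f // inE yB.
  + by move=> fxy; move: (fBU y yB); rewrite -fxy imset_f // inE xB.
  + by apply: w_inj; rewrite inE ?xB ?yB.
- by move=> x /setDP[_ /negbTE ->].
- by rewrite -[RHS]f_sum big_enum; apply: eq_bigr => x ->.
Qed.

Lemma partition_zero_sum_injection (T : finType) (P : {set {set T}}) (D : {set T}) :
    partition P D -> {in P, forall B : {set T}, 3 <= #|B|}%N ->
    (2 * #|D| + 1 <= #|G|)%N ->
  exists2 w : T -> G,
    {in D &, injective w} & {in P, forall B : {set T}, \sum_(x in B) w x = 0}.
Proof.
move nP: #|P| => n; elim: n P D nP => [|n IHn] P D nP partP P3 large_G.
  have P0 : P = set0 by apply/eqP; rewrite -cards_eq0 nP.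
  have D0 : D = set0 by rewrite -(cover_partition partP) P0 /cover big_set0.
  by exists (fun=> 0) => [x|B]; rewrite ?D0 ?P0 inE.
have /card_gt0P[B BP] : (0 < #|P|)%N by rewrite nP.
have BD : B \subset D := partitionS partP BP.
have partP' := partitionD1 partP BP.
have nP' : #|P :\ B| = n by move: nP; rewrite (cardsD1 B) BP add1n => -[].
have P3' : {in P :\ B, forall B' : {set T}, 3 <= #|B'|}%N.
  by move=> B' /setD1P[_ /P3].
have large_G' : (2 * #|D :\: B| + 1 <= #|G|)%N.
  apply: leq_trans large_G.
  by rewrite leq_add2r leq_mul2l subset_leq_card ?subsetDl ?orbT.
have [w' w'_inj w'_sum] := IHn _ _ nP' partP' P3' large_G'.
have [w [w_inj w_w' w_sum]] := extend_zero_sum_injection BD (P3 B BP) large_G w'_inj.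
exists w => // B' B'P; have [-> // | B'B] := eqVneq B' B.
have B'P' : B' \in P :\ B by rewrite !inE B'B.
rewrite -[RHS](w'_sum B' B'P'); apply: eq_bigr => x xB'; apply: w_w'.
exact: subsetP (partitionS partP' B'P') x xB'.
Qed.

End ZeroSumInjections.

Section Realization.
Set Implicit Arguments. Unset Strict Implicit. Unset Printing Implicit Defensive.
Import GRing.Theory.
Local Open Scope ring_scope.

Variables (V : finType) (a : rel V) (G : zmodType).

Lemma connect_underlying_sym : connect_sym (underlying a).
Proof. by apply: sym_connect_sym => x y; rewrite /underlying orbC. Qed.

Lemma wcomp_partition : partition [set wcomp a x | x in [set: V]] [set: V].
Proof.
have -> : [set wcomp a x | x in [set: V]]
          = equivalence_partition (connect (underlying a)) [set: V].
  by apply: eq_imset => x; apply/setP => y; rewrite !inE.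
apply: equivalence_partitionP => x y z _ _ _; split; first exact: connect0.
by move=> xy; apply: (same_connect connect_underlying_sym xy).
Qed.

Definition point_mass (z : V) (g : G) (u : V) : G := if u == z then g else 0.

Definition realizable (f : V -> G) := exists psi : V -> V -> G, weight a psi =1 f.

Lemma eq_realizable f1 f2 : f1 =1 f2 -> realizable f1 -> realizable f2.
Proof. by move=> f12 [psi psi_f]; exists psi => u; rewrite psi_f f12. Qed.

Lemma realizable0 : realizable (fun=> 0).
Proof. by exists (fun _ _ => 0) => u; rewrite /weight !big1 ?subr0. Qed.

Lemma realizableN f : realizable f -> realizable (fun u => - f u).
Proof.
move=> [psi psi_f]; exists (fun x y => - psi x y) => u.
by rewrite -psi_f /weight !sumrN opprK opprB addrC.
Qed.

Lemma realizableD f1 f2 :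
  realizable f1 -> realizable f2 -> realizable (fun u => f1 u + f2 u).
Proof.
move=> [psi1 psi1_f] [psi2 psi2_f]; exists (fun x y => psi1 x y + psi2 x y) => u.
by rewrite -psi1_f -psi2_f /weight !big_split opprD addrACA.
Qed.

Lemma realizable_sum (I : Type) (r : seq I) (F : I -> V -> G) :
  (forall i, realizable (F i)) -> realizable (fun u => \sum_(i <- r) F i u).
Proof.
move=> F_real; elim: r => [|i r IHr].
  by apply: eq_realizable realizable0 => u; rewrite big_nil.
by apply: eq_realizable (realizableD (F_real i) IHr) => u; rewrite big_cons.
Qed.

Lemma realizable_arc x z g :
  a x z -> realizable (fun u => point_mass z g u - point_mass x g u).
Proof.
move=> axz; exists (fun p q => if (p == x) && (q == z) then g else 0) => u.
rewrite /weight /point_mass; congr (_ - _).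
  have [-> | _] := eqVneq u z; last by rewrite big1 // => y _; rewrite andbF.
  rewrite -big_mkcondr (big_pred1 x) // => y /=.
  by rewrite andbT; have [->|] := eqVneq y x; rewrite ?axz ?andbF.
have [-> | _] := eqVneq u x; last by rewrite big1.
rewrite -big_mkcondr (big_pred1 z) // => y /=.
by have [->|] := eqVneq y z; rewrite ?axz ?andbF.
Qed.

Lemma realizable_connect x z g : connect (underlying a) x z ->
  realizable (fun u => point_mass z g u - point_mass x g u).
Proof.
move=> /connectP[p]; elim: p x => [|y p IHp] x /= => [_ -> | /andP[xy yp] z_last].
  by apply: eq_realizable realizable0 => u; rewrite subrr.
have xy_real : realizable (fun u => point_mass y g u - point_mass x g u).
  case/orP: xy => [/realizable_arc // | /(realizable_arc g)/realizableN].
  by apply: eq_realizable => u; rewrite opprB.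
apply: eq_realizable (realizableD (IHp y yp z_last) xy_real) => u.
by rewrite addrA subrK.
Qed.

Lemma zero_sum_realizable (w : V -> G) :
  (forall x, \sum_(y in wcomp a x) w y = 0) -> realizable w.
Proof.
move=> w_sum; pose r := fingraph.root (underlying a).
have mass_sum u : \sum_x point_mass x (w x) u = w u.
  by rewrite /point_mass -big_mkcond (big_pred1 u) // => x; rewrite /= eq_sym.
have root_mass_sum u : \sum_x point_mass (r x) (w x) u = 0.
  rewrite /point_mass -big_mkcond /=.
  have [ru | nru] := eqVneq (r u) u.
    rewrite -[RHS](w_sum u); apply: eq_bigl => x; rewrite inE -{1}ru.
    by apply/eqP/(fingraph.rootP connect_underlying_sym).
  rewrite big_pred0 // => x; apply: contraNF nru => /eqP ->.
  by rewrite /r (fingraph.root_root connect_underlying_sym).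
pose F x u := point_mass x (w x) u - point_mass (r x) (w x) u.
apply: eq_realizable (realizable_sum (index_enum V) (F := F) _) => [u | x].
  by rewrite big_split sumrN /= mass_sum root_mass_sum subr0.
by apply: realizable_connect; rewrite connect_underlying_sym connect_root.
Qed.

End Realization.

Theorem corollary4p5 (V : finType) (a : rel V) :
  loopless a ->
  (forall x : V, 4 <= #|wcomp a x|) ->
  forall G : finZmodType, 2 * #|V| + 1 <= #|G| ->
  exists psi : V -> V -> G, irregular_labeling a psi.
Proof.
(* A loop adds its label to both sums of [weight]. *)
move=> _ large_wcomp G large_G.
have blocks3 : {in [set wcomp a x | x in [set: V]], forall B : {set V}, 3 <= #|B|}.
  by move=> _ /imsetP[x _ ->]; apply: leq_trans (large_wcomp x).
have large_G' : 2 * #|[set: V]| + 1 <= #|G| by rewrite cardsT.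
have [w w_inj w_sum] :=
  partition_zero_sum_injection (wcomp_partition a) blocks3 large_G'.
have [psi psi_w] := zero_sum_realizable (fun x => w_sum _ (imset_f _ (in_setT x))).
by exists psi => x y; rewrite !psi_w; apply: w_inj; rewrite inE.
Qed.
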